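(* Let $\mathcal{A}$ be a finite abelian group with $|\mathcal{A}|\ge 3$. For integers $p_1\ge 1$ and $p_2\ge 0$, let $G_2(p_1,p_2)$ be the graph consisting of a triangle $v_2v_3v_4$, a vertex $v_1$ adjacent to $v_2$, $p_1$ pendant vertices adjacent to $v_1$, and $p_2$ pendant vertices adjacent to $v_2$. Then $G_2(p_1,p_2)$ is $\mathcal{A}$-vertex magic if and only if $p_2=0$ and $|\mathcal{A}|$ is even.
   Context: A map $\ell:V(G)\to\mathcal{A}\setminus\{0\}$ is an $\mathcal{A}$-vertex magic labeling if there is $\mu\in\mathcal{A}$ with $\sum_{u\in N(v)}\ell(u)=\mu$ for every vertex $v$; $G$ is $\mathcal{A}$-vertex magic if such a labeling exists. A pendant vertex is a vertex of degree $1$. *)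

From HB Require Import structures.
From mathcomp Require Import all_boot all_order all_algebra.
Set Implicit Arguments. Unset Strict Implicit. Unset Printing Implicit Defensive.
Import GRing.Theory.
Local Open Scope ring_scope.

(* A (simple) graph is given by a symmetric irreflexive relation on a finite
   vertex type; N(v) = [pred u | adj v u]. *)
Definition is_vertex_magic_labeling (A : zmodType) (V : finType) (adj : rel V)
  (l : V -> A) : Prop :=
  (forall v, l v != 0) /\ exists mu : A, forall v, \sum_(u | adj v u) l u = mu.

Definition vertex_magic (A : zmodType) (V : finType) (adj : rel V) : Prop :=
  exists l : V -> A, is_vertex_magic_labeling adj l.

(* Vertices of G_2(p1,p2): inl i (i : 'I_4) is v_(i+1);
   inr (inl k) is the k-th pendant at v1; inr (inr k) the k-th pendant at v2. *)
Definition G2V (p1 p2 : nat) : finType := ('I_4 + ('I_p1 + 'I_p2))%type.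

Definition G2_edge (p1 p2 : nat) (x y : G2V p1 p2) : bool :=
  match x, y with
  | inl i, inl j =>
      [|| (val i == 0%N) && (val j == 1%N),
          (val i == 1%N) && (val j == 2%N),
          (val i == 2%N) && (val j == 3%N)
        | (val i == 1%N) && (val j == 3%N)]
  | inr (inl _), inl j => val j == 0%N
  | inr (inr _), inl j => val j == 1%N
  | _, _ => false
  end.

Definition G2_adj (p1 p2 : nat) : rel (G2V p1 p2) :=
  fun x y => G2_edge x y || G2_edge y x.

From mathcomp Require Import all_boot all_order all_algebra all_fingroup all_solvable.
Set Implicit Arguments. Unset Strict Implicit. Unset Printing Implicit Defensive.
Import GRing.Theory FinRing.Theory.
Local Open Scope ring_scope.

(* Reading the magic condition vertex by vertex: a pendant at v1 forces
   l(v1) = mu, and a pendant at v2 would force l(v2) = mu, hence l(v4) = 0 by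
   the condition at v3; so p2 = 0.  The conditions at v3 and v4 give
   l(v3) = l(v4) =: t, and the one at v2 then reads mu + 2t = mu, so t has
   order 2 and |A| is even.  Conversely, take t of order 2 (Cauchy) and
   x outside {0, t}; label v1, v2, v3, v4 by x, x - t, t, t and the pendants by
   nonzero elements summing to t (possible as |A| >= 3): every neighbourhood
   then sums to x. *)

Lemma exists_neq2 (T : finType) (a b : T) : (2 < #|T|)%N ->
  exists y, y != a /\ y != b.
Proof.
move=> T_gt2; have : (0 < #|~: [set a; b]|)%N.
  rewrite -(leq_add2l #|[set a; b]|) cardsC cards2 addn1.
  by apply: leq_trans T_gt2; rewrite !ltnS leq_b1.
by case/card_gt0P=> y; rewrite !inE negb_or => /andP[]; exists y.
Qed.

Lemma mulrn_order2 (A : zmodType) (x : A) (n : nat) :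
  x + x = 0 -> x *+ n = x *+ odd n.
Proof.
move=> xx0; elim: n => [|n IHn] //.
by rewrite mulrS IHn /=; case: (odd n); rewrite ?addr0 ?add0r.
Qed.

Lemma order2_card_even (A : finZmodType) (x : A) :
  x != 0 -> x + x = 0 -> ~~ odd #|A|.
Proof.
move=> x_neq0 xx0; apply: contra x_neq0 => A_odd.
have <- : x *+ #|A| = 0 by rewrite -zmodXgE -cardsT (@expg_cardG _ [set: A]%G) ?inE.
by rewrite mulrn_order2 // A_odd.
Qed.

Lemma card_even_order2 (A : finZmodType) :
  ~~ odd #|A| -> exists x : A, x != 0 /\ x + x = 0.
Proof.
move=> A_even; have [|x _ ox] := @Cauchy _ 2 [set: A]%G isT.
  by rewrite cardsT dvdn2.
exists x; split; first by apply/eqP=> x0; move: ox; rewrite x0 -zmod1gE order1.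
by rewrite -mulr2n -zmodXgE -ox expg_order.
Qed.

Lemma nonzero_sum_decomposition (A : finZmodType) (n : nat) (a : A) :
  (2 < #|A|)%N -> (0 < n)%N -> a != 0 ->
  exists f : 'I_n -> A, (forall k, f k != 0) /\ \sum_k f k = a.
Proof.
move=> A_gt2; elim: n a => [//|[|n] IHn] a _ a_neq0.
  by exists (fun=> a); split=> //; rewrite big_ord1.
have [y [y_neq0 y_neqa]] := exists_neq2 0 a A_gt2.
have [|f [f_neq0 sum_f]] := IHn (a - y) isT; first by rewrite subr_eq0 eq_sym.
exists (fun k => if unlift ord0 k is Some k' then f k' else y); split.
  by move=> k; case: unlift.
rewrite big_ord_recl unlift_none.
by under eq_bigr do rewrite liftK; rewrite sum_f addrC subrK.
Qed.

Lemma sum_ord4 (V : nmodType) (F : 'I_4 -> V) :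
  \sum_j F j = F (Ordinal (isT : 0 < 4)%N) + F (Ordinal (isT : 1 < 4)%N)
              + F (Ordinal (isT : 2 < 4)%N) + F (Ordinal (isT : 3 < 4)%N).
Proof.
rewrite !big_ord_recl big_ord0 addr0 !addrA.
by congr (F _ + F _ + F _ + F _); apply: val_inj.
Qed.

Section G2Labeling.
Variables (A : zmodType) (p1 p2 : nat) (l : G2V p1 p2 -> A).

Local Notation v1 := (inl (@Ordinal 4 0 isT) : G2V p1 p2).
Local Notation v2 := (inl (@Ordinal 4 1 isT) : G2V p1 p2).
Local Notation v3 := (inl (@Ordinal 4 2 isT) : G2V p1 p2).
Local Notation v4 := (inl (@Ordinal 4 3 isT) : G2V p1 p2).

Lemma sum_G2_adj (v : G2V p1 p2) :
  \sum_(u | G2_adj v u) l u =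
  match v with
  | inl i => match val i with
             | 0 => l v2 + \sum_k l (inr (inl k))
             | 1 => l v1 + l v3 + l v4 + \sum_k l (inr (inr k))
             | 2 => l v2 + l v4
             | _ => l v2 + l v3
             end
  | inr (inl _) => l v1
  | inr (inr _) => l v2
  end.
Proof.
rewrite !big_sumType /= big_mkcond sum_ord4 /G2_adj /=.
case: v => [[[|[|[|[|//]]]] ?]|[k|k]].
all: by rewrite ?eqE /= ?big_pred0_eq !(addr0, add0r).
Qed.

Lemma G2_magic_necessary :
  (0 < p1)%N -> is_vertex_magic_labeling (@G2_adj p1 p2) l ->
  p2 = 0%N /\ exists t : A, t != 0 /\ t + t = 0.
Proof.
move=> p1_gt0 [l_neq0 [mu l_magic]].
have nbr_v1 : l v1 = mu by rewrite -(l_magic (inr (inl (Ordinal p1_gt0)))) sum_G2_adj.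
have nbr_v2 : l v1 + l v3 + l v4 + \sum_k l (inr (inr k)) = mu.
  by rewrite -(l_magic v2) sum_G2_adj.
have nbr_v3 : l v2 + l v4 = mu by rewrite -(l_magic v3) sum_G2_adj.
have nbr_v4 : l v2 + l v3 = mu by rewrite -(l_magic v4) sum_G2_adj.
have p2_eq0 : p2 = 0%N.
  case: (posnP p2) => // p2_gt0.
  have nbr_pendant2 : l v2 = mu.
    by rewrite -(l_magic (inr (inr (Ordinal p2_gt0)))) sum_G2_adj.
  suff l_v4_eq0 : l v4 = 0 by move: (l_neq0 v4); rewrite l_v4_eq0 eqxx.
  by apply: (addrI mu); rewrite addr0 -{2}nbr_v3 nbr_pendant2.
split=> //; exists (l v3); split; first exact: l_neq0.
have l_v3_v4 : l v3 = l v4 by apply: (addrI (l v2)); rewrite nbr_v4 nbr_v3.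
have no_pendant2 : \sum_k l (inr (inr k)) = 0.
  by apply: big1 => k; suff: (k < 0)%N by []; rewrite -p2_eq0.
apply: (addrI mu); rewrite addr0 -{2}nbr_v2 no_pendant2 addr0 nbr_v1 {2}l_v3_v4.
by rewrite addrA.
Qed.
End G2Labeling.

Lemma G2_magic_sufficient (A : finZmodType) (p1 : nat) :
  (2 < #|A|)%N -> (0 < p1)%N -> (exists t : A, t != 0 /\ t + t = 0) ->
  vertex_magic A (@G2_adj p1 0).
Proof.
move=> A_gt2 p1_gt0 [t [t_neq0 tt0]].
have [x [x_neq0 x_neqt]] := exists_neq2 0 t A_gt2.
have [f [f_neq0 sum_f]] := nonzero_sum_decomposition A_gt2 p1_gt0 t_neq0.
pose l (v : G2V p1 0) := match v with
  | inl i => match val i with 0 => x | 1 => x - t | _ => t end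
  | inr (inl k) => f k
  | inr (inr _) => x
  end.
exists l; split.
  by case=> [[[|[|i]] ?]|[k|k]] //=; rewrite subr_eq0.
exists x; case=> [[[|[|[|[|//]]]] ?]|[k|[]//]]; rewrite sum_G2_adj /=.
all: by rewrite ?big_ord0 ?sum_f ?subrK // addr0 -addrA tt0 addr0.
Qed.

Theorem proposition3p2 (A : finZmodType) (p1 p2 : nat) :
  (3 <= #|A|)%N -> (1 <= p1)%N ->
  (@vertex_magic A (G2V p1 p2) (@G2_adj p1 p2) <-> p2 = 0%N /\ ~~ odd #|A|).
Proof.
move=> A_ge3 p1_gt0; split.
  case=> l /(G2_magic_necessary p1_gt0) [p2_eq0 [t [t_neq0 tt0]]].
  by split=> //; apply: order2_card_even t_neq0 tt0.
by case=> -> /card_even_order2; apply: G2_magic_sufficient.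
Qed.
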